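(* Let $(G_a,G_b)\sim ER(n;\mathbf{p})$ on vertex set $V$, and assume $\varepsilon\triangleq \frac{p_{01}}{p_{0*}}+\frac{p_{10}}{p_{1*}}<1$. Let $u,v\in V$ with $d_a(u)>d_a(v)$, define $\varphi\triangleq d_a(u)\frac{p_{10}}{p_{1*}}+\bar d_a(v)\frac{p_{01}}{p_{0*}}$, let $k$ be a real number and let $\eta\in(0,\infty)$ (possibly depending on $n$). If \[ d_a(u)-d_a(v)\ \ge\ (1-\varepsilon)^{-1}\Big(k+4\max\big(\eta,\sqrt{\varphi\cdot\eta}\big)\Big), \] then, conditionally on $G_a$, $\Pr[d_b(u)-d_b(v)\le k]\le e^{-\eta}$.
   Context: Correlated Erdős–Rényi model $ER(n;\mathbf{p})$: $G_a$ and $G_b$ are random graphs on the same $n$-vertex set $V$; for each unordered pair $e$ of distinct vertices, independently, $(\mathbf 1[e\in E(G_a)],\mathbf 1[e\in E(G_b)])$ equals $(1,1),(1,0),(0,1),(0,0)$ with probabilities $p_{11},p_{10},p_{01},p_{00}$. Marginals: $p_{1*}=p_{11}+p_{10}$, $p_{0*}=p_{01}+p_{00}$. Notation: $d_a(x)$, $d_b(x)$ are the degrees of $x$ in $G_a$, $G_b$; $\bar d_a(x)=n-1-d_a(x)$ is the complementary degree of $x$ in $G_a$. *)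

From HB Require Import structures.
From mathcomp Require Import all_boot all_order all_algebra.
From mathcomp Require Import reals sequences exp.
Set Implicit Arguments. Unset Strict Implicit. Unset Printing Implicit Defensive.
Import Order.TTheory GRing.Theory Num.Theory.
Local Open Scope ring_scope.

Definition vpairs (n : nat) : {set {set 'I_n}} := [set e : {set 'I_n} | #|e| == 2%N].

(* A graph on V is a set of edges E \subset vpairs n. Degree of x. *)
Definition deg (n : nat) (E : {set {set 'I_n}}) (x : 'I_n) : nat :=
  #|[set e in E | x \in e]|.

Definition cdeg (n : nat) (E : {set {set 'I_n}}) (x : 'I_n) : nat :=
  (n.-1 - deg E x)%N.

(* Per-pair law: P[(1[e in Ga], 1[e in Gb]) = (a,b)] = p_ab. *)
Definition pab {R : realType} (p11 p10 p01 p00 : R) (a b : bool) : R :=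
  if a then (if b then p11 else p10) else (if b then p01 else p00).

Definition ER_joint {R : realType} (n : nat) (p11 p10 p01 p00 : R)
    (A B : {set {set 'I_n}}) : R :=
  if (A \subset vpairs n) && (B \subset vpairs n) then
    \prod_(e in vpairs n) pab p11 p10 p01 p00 (e \in A) (e \in B)
  else 0.

Definition ER_cond_prob {R : realType} (n : nat) (p11 p10 p01 p00 : R)
    (A : {set {set 'I_n}}) (Ev : pred {set {set 'I_n}}) : R :=
  (\sum_(B | Ev B) ER_joint p11 p10 p01 p00 A B)
  / (\sum_B ER_joint p11 p10 p01 p00 A B).

(* Conditionally on G_a, the indicators X_e = 1[e \in G_b] are independent
   Bernoulli variables and d_b(u) - d_b(v) = sum_e c_e X_e with
   c_e = 1[u \in e] - 1[v \in e].  Markov's inequality for exp (- l D) gives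
   P[D <= k] <= exp (l k) prod_e E[exp (- l c_e X_e)].  Each factor is bounded
   through 1 + y <= exp y, after pulling out exp (- l c_e) for the edges of G_a,
   so that only the flip probabilities q1 = p10/p1* and q0 = p01/p0* appear.
   For l <= 1/2 the exponent is then at most - l t + 3 l^2 phi with
   t = (1 - eps)(d_a(u) - d_a(v)) - k, and l = min (1/2, t / (8 phi)) makes it
   at most - eta. *)

From HB Require Import structures.
From mathcomp Require Import all_boot all_order all_algebra.
From mathcomp Require Import reals sequences exp.
From mathcomp Require Import ring lra.
Import Order.TTheory GRing.Theory Num.Theory.
Local Open Scope ring_scope.

Section ExpBounds.
Context {R : realType}.
Implicit Types (l q x : R).

Lemma expR_mix_le q x : q * expR x + (1 - q) <= expR (q * (expR x - 1)).
Proof. by have := expR_ge1Dx (q * (expR x - 1)); lra. Qed.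

Lemma expR_mix_flip_le q x : (1 - q) * expR x + q <= expR (x + q * (expR (- x) - 1)).
Proof.
have expRNK : expR x * expR (- x) = 1 by rewrite -expRD subrr expR0.
have -> : (1 - q) * expR x + q = expR x * (q * expR (- x) + (1 - q)).
  by rewrite mulrDr mulrCA expRNK; ring.
by rewrite expRD ler_wpM2l ?expR_ge0 ?expR_mix_le.
Qed.

Lemma expR_add_expRN_ge2 x : 2 <= expR x + expR (- x).
Proof. by have := expR_ge1Dx x; have := expR_ge1Dx (- x); lra. Qed.

Lemma expR_sub1_le l : 0 <= l -> l <= 1 / 2 -> expR l - 1 <= l + 2 * l ^+ 2.
Proof.
move=> l_ge0 l_le.
have expRNK : expR (- l) * expR l = 1 by rewrite -expRD addNr expR0.
have := expR_ge1Dx (- l); have := expR_gt0 l; nra.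
Qed.

Lemma expRN_sub1_le l : 0 <= l -> expR (- l) - 1 <= - l + l ^+ 2.
Proof.
move=> l_ge0.
have expRNK : expR (- l) * expR l = 1 by rewrite -expRD addNr expR0.
have := expR_ge1Dx l; have := expR_gt0 (- l); nra.
Qed.

(* A bound on log E[exp (x X)] for X = 1[e \in G_b] given 1[e \in G_a] = b,
   where q1 = P[X = 0 | e \in G_a] and q0 = P[X = 1 | e \notin G_a]; the
   [b = true] branch is expanded around [x] so that it is small in [q1]. *)
Definition edge_lmgf_bound (q1 q0 : R) (b : bool) (x : R) : R :=
  if b then x + q1 * (expR (- x) - 1) else q0 * (expR x - 1).

End ExpBounds.

Lemma indicator_diff_le (R : numDomainType) (g : R -> R) (s t : bool) :
  g 0 = 0 -> 0 <= g 1 + g (-1) ->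
  g (s%:R - t%:R) <= s%:R * g 1 + t%:R * g (-1).
Proof.
by move=> g0 g_ge0; case: s; case: t;
  rewrite /= ?subrr ?subr0 ?sub0r ?mul1r ?mul0r ?addr0 ?add0r ?g0.
Qed.

Section ChernoffParameter.
Context {R : realType}.

Lemma chernoff_exponent_le {l q1 q0 a b ca cb : R} :
  0 <= l -> l <= 1 / 2 -> 0 <= q1 -> 0 <= q0 ->
  0 <= b -> b <= a -> 0 <= ca -> a + ca = b + cb ->
  a * (- l + q1 * (expR l - 1)) + ca * (q0 * (expR (- l) - 1))
  + b * (l + q1 * (expR (- l) - 1)) + cb * (q0 * (expR l - 1))
  <= - l * ((a - b) * (1 - q1 - q0)) + 3 * l ^+ 2 * (a * q1 + cb * q0).
Proof.
move=> l_ge0 l_le q1_ge0 q0_ge0 b_ge0 ba ca_ge0 sum_eq.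
have expR_le : expR l - 1 <= l + 2 * l ^+ 2 by exact: expR_sub1_le.
have expRN_le : expR (- l) - 1 <= - l + l ^+ 2 by exact: expRN_sub1_le.
have := ler_wpM2l (mulr_ge0 (le_trans b_ge0 ba) q1_ge0) expR_le.
have := ler_wpM2l (mulr_ge0 ca_ge0 q0_ge0) expRN_le.
have := ler_wpM2l (mulr_ge0 b_ge0 q1_ge0) expRN_le.
have cb_ge0 : 0 <= cb by lra.
have := ler_wpM2l (mulr_ge0 cb_ge0 q0_ge0) expR_le.
have : 0 <= l ^+ 2 * ((a - b) * q1 + (cb - ca) * q0).
  by apply: mulr_ge0; [exact: sqr_ge0 | nra].
nra.
Qed.

Lemma exists_chernoff_param {t phi eta : R} :
  0 <= phi -> 0 < eta -> 4 * Num.max eta (Num.sqrt (phi * eta)) <= t ->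
  exists2 l, 0 <= l <= 1 / 2 & - l * t + 3 * l ^+ 2 * phi <= - eta.
Proof.
move=> phi_ge0 eta_gt0 t_ge.
have eta_le : eta <= Num.max eta (Num.sqrt (phi * eta)) by rewrite le_max lexx.
have sqrt_le : Num.sqrt (phi * eta) <= Num.max eta (Num.sqrt (phi * eta)).
  by rewrite le_max lexx orbT.
have sqrt_sq : Num.sqrt (phi * eta) ^+ 2 = phi * eta by rewrite sqr_sqrtr // mulr_ge0 // ltW.
have t_eta : 4 * eta <= t by lra.
have t_sq : 16 * (phi * eta) <= t ^+ 2.
  have t_sqrt : 4 * Num.sqrt (phi * eta) <= t by lra.
  by have := sqrtr_ge0 (phi * eta); nra.
have [t_le | phi_lt] := lerP t (4 * phi); last first.
  by exists (1 / 2); [apply/andP; split; lra | nra].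
have phi_gt0 : 0 < phi by lra.
exists (t / (8 * phi)).
  by apply/andP; split; [apply: divr_ge0; lra | rewrite ler_pdivrMr; lra].
set l := t / (8 * phi).
have l_phi : l * phi = t / 8 by rewrite /l; field; lra.
have : 0 <= phi * (5 * l * t - 8 * eta) by nra.
by rewrite pmulr_rge0 //; nra.
Qed.

End ChernoffParameter.

Lemma sum_subsets_prod (R : comPzSemiRingType) (T : finType) (F : T -> bool -> R) :
  \sum_(B : {set T}) \prod_(e : T) F e (e \in B) = \prod_(e : T) (F e true + F e false).
Proof.
transitivity (\prod_(e : T) \sum_(b : bool) F e b); last first.
  by apply: eq_bigr => e _; rewrite big_bool.
rewrite bigA_distr_bigA (reindex (fun f : {ffun T -> bool} => [set e | f e])) /=.
  by apply: eq_bigr => f _; apply: eq_bigr => e _; rewrite inE.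
exists (fun B : {set T} => [ffun e => e \in B]) => [f _ | B _].
  by apply/ffunP => e; rewrite ffunE inE.
by apply/setP => e; rewrite inE ffunE.
Qed.

Lemma card_vpairs_incident {n : nat} (w : 'I_n) :
  #|[set e in vpairs n | w \in e]| = n.-1.
Proof.
have -> : [set e in vpairs n | w \in e] = [set [set w; z] | z in [set~ w]].
  apply/setP => e; rewrite !inE; apply/andP/imsetP.
    case=> /cards2P [x [y [xy ->]]]; rewrite !inE => /orP [/eqP->|/eqP->].
      by exists y; rewrite ?inE // eq_sym.
    by exists x; rewrite ?inE // setUC.
  case=> z; rewrite !inE => zw ->; split; last by rewrite !inE eqxx.
  by rewrite cards2 (eq_sym w) zw.
rewrite card_in_imset ?cardsC1 ?card_ord // => z1 z2; rewrite !inE => z1w _ E.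
have : z1 \in [set w; z2] by rewrite -E !inE eqxx orbT.
by rewrite !inE (negbTE z1w) => /eqP.
Qed.

Section Degrees.
Context {n : nat} {A : {set {set 'I_n}}} (hA : A \subset vpairs n) (w : 'I_n).
Let U := [set e in vpairs n | w \in e].

Lemma deg_incident : deg A w = #|U :&: A|.
Proof.
apply: eq_card => e; rewrite !inE; case eA: (e \in A); rewrite ?andbF ?andbT //.
by have := subsetP hA e eA; rewrite inE => ->.
Qed.

Lemma cdeg_incident : cdeg A w = #|U :\: A|.
Proof. by rewrite /cdeg deg_incident -(card_vpairs_incident w) -(cardsID A U) addKn. Qed.

Lemma deg_add_cdeg : (deg A w + cdeg A w)%N = n.-1.
Proof. by rewrite deg_incident cdeg_incident cardsID card_vpairs_incident. Qed.

Lemma sum_incident {R : pzSemiRingType} (f : bool -> R) :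
  \sum_(e in vpairs n) (w \in e)%:R * f (e \in A) =
  (deg A w)%:R * f true + (cdeg A w)%:R * f false.
Proof.
have sum_const b (X : {set {set 'I_n}}) : {in X, forall e, (e \in A) = b} ->
    \sum_(e in X) f (e \in A) = #|X|%:R * f b.
  by move=> XA; rewrite (eq_bigr (fun=> f b)) ?sumr_const ?mulr_natl // => e /XA ->.
transitivity (\sum_(e in U) f (e \in A)).
  rewrite big_mkcond [RHS]big_mkcond; apply: eq_bigr => e _; rewrite /U inE.
  by case: (e \in vpairs n); case: (w \in e); rewrite /= ?mul1r ?mul0r.
rewrite (big_setID A) /= deg_incident cdeg_incident.
rewrite (sum_const true) ?(sum_const false) // => e; rewrite !inE.
  by case/andP=> /negbTE.
by case/andP.
Qed.

End Degrees.

Section ErdosRenyi.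
Context {R : realType} {n : nat} {p11 p10 p01 p00 : R}.
Local Notation pr := (pab p11 p10 p01 p00).
Local Notation joint := (ER_joint p11 p10 p01 p00).

Lemma ER_joint_sum_prod {A : {set {set 'I_n}}} (hA : A \subset vpairs n)
    (h : {set 'I_n} -> bool -> R) :
  \sum_B joint A B * \prod_(e in vpairs n) h e (e \in B) =
  \prod_(e in vpairs n) (pr (e \in A) true * h e true + pr (e \in A) false * h e false).
Proof.
(* Outside [vpairs n] the factor is 1[e \notin B], which kills every B that is not a graph. *)
pose F e b := if e \in vpairs n then pr (e \in A) b * h e b else (~~ b)%:R.
transitivity (\sum_(B : {set {set 'I_n}}) \prod_e F e (e \in B)).
  apply: eq_bigr => B _; rewrite /ER_joint hA /=.
  have [BS | /subsetPn [e eB eS]] := boolP (B \subset vpairs n).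
    rewrite -big_split big_mkcond /=; apply: eq_bigr => e _; rewrite /F.
    by case: ifPn => // eS; rewrite (contraNF (subsetP BS e)).
  by rewrite mul0r (bigD1 e) //= /F (negbTE eS) eB mul0r.
rewrite sum_subsets_prod [RHS]big_mkcond; apply: eq_bigr => e _; rewrite /F.
by case: (e \in vpairs n); rewrite /= ?add0r.
Qed.

Lemma deg_sum (B : {set {set 'I_n}}) (x : 'I_n) : B \subset vpairs n ->
  (deg B x)%:R = \sum_(e in vpairs n) (x \in e)%:R * (e \in B)%:R :> R.
Proof. by move=> hB; rewrite (sum_incident hB x (fun b => b%:R)) mulr1 mulr0 addr0. Qed.

Hypotheses (hp11 : 0 <= p11) (hp10 : 0 <= p10) (hp01 : 0 <= p01) (hp00 : 0 <= p00).

Lemma pab_ge0 (b c : bool) : 0 <= pr b c.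
Proof. by rewrite /pab; case: b; case: c. Qed.

Lemma ER_joint_ge0 (A B : {set {set 'I_n}}) : 0 <= joint A B.
Proof. by rewrite /ER_joint; case: ifP => // _; apply: prodr_ge0 => e _; exact: pab_ge0. Qed.

Lemma ER_cond_prob_deg_diff_le_prod (A : {set {set 'I_n}}) (u v : 'I_n) (k l : R) :
  A \subset vpairs n -> 0 <= l ->
  ER_cond_prob p11 p10 p01 p00 A (fun B => (deg B u)%:R - (deg B v)%:R <= k)
  <= expR (l * k) * \prod_(e in vpairs n)
       ((pr (e \in A) true * expR (- l * ((u \in e)%:R - (v \in e)%:R)) + pr (e \in A) false)
        / (pr (e \in A) true + pr (e \in A) false)).
Proof.
move=> hA l_ge0.
pose c (e : {set 'I_n}) : R := (u \in e)%:R - (v \in e)%:R.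
have total : \sum_B joint A B = \prod_(e in vpairs n) (pr (e \in A) true + pr (e \in A) false).
  transitivity (\sum_B joint A B * \prod_(e in vpairs n) 1).
    by under [RHS]eq_bigr do rewrite big1_eq mulr1.
  by rewrite (ER_joint_sum_prod hA (fun _ _ => 1)); under eq_bigr do rewrite !mulr1.
have mgf : \sum_B joint A B * \prod_(e in vpairs n) expR (- l * (c e * (e \in B)%:R))
    = \prod_(e in vpairs n) (pr (e \in A) true * expR (- l * c e) + pr (e \in A) false).
  rewrite (ER_joint_sum_prod hA (fun e b => expR (- l * (c e * b%:R)))).
  by apply: eq_bigr => e _; rewrite mulr1 !mulr0 expR0 mulr1.
rewrite /ER_cond_prob prodf_div -mgf -total mulrA; apply: ler_wpM2r.
  by rewrite invr_ge0 sumr_ge0 // => B _; exact: ER_joint_ge0.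
rewrite mulr_sumr big_mkcond; apply: ler_sum => B _.
case: ifPn => D_le; last first.
  by rewrite mulr_ge0 ?expR_ge0 ?mulr_ge0 ?ER_joint_ge0 // prodr_ge0 // => e _; exact: expR_ge0.
have [hB | nhB] := boolP (B \subset vpairs n); last first.
  by rewrite /ER_joint hA (negbTE nhB) /= !mul0r mulr0.
rewrite -expR_sum -mulr_sumr.
have -> : \sum_(e in vpairs n) c e * (e \in B)%:R = (deg B u)%:R - (deg B v)%:R.
  by rewrite !deg_sum // -sumrB; apply: eq_bigr => e _; rewrite mulrBl.
rewrite mulrCA -expRD ler_peMr ?ER_joint_ge0 // (le_trans _ (expR_ge1Dx _)) // lerDl.
by rewrite mulNr -mulrBr mulr_ge0 // subr_ge0.
Qed.

Hypotheses (hp1 : 0 < p11 + p10) (hp0 : 0 < p01 + p00).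
Let q1 := p10 / (p11 + p10).
Let q0 := p01 / (p01 + p00).

Lemma pab_mgf_le (b : bool) (x : R) :
  (pr b true * expR x + pr b false) / (pr b true + pr b false)
  <= expR (edge_lmgf_bound q1 q0 b x).
Proof.
case: b; rewrite /pab /edge_lmgf_bound.
  rewrite (_ : _ / _ = (1 - q1) * expR x + q1) ?expR_mix_flip_le //.
  by rewrite /q1; field; rewrite gt_eqF.
rewrite (_ : _ / _ = q0 * expR x + (1 - q0)) ?expR_mix_le //.
by rewrite /q0; field; rewrite gt_eqF.
Qed.

Lemma edge_lmgf_bound_split (b s t : bool) (l : R) :
  edge_lmgf_bound q1 q0 b (- l * (s%:R - t%:R))
  <= s%:R * edge_lmgf_bound q1 q0 b (- l) + t%:R * edge_lmgf_bound q1 q0 b l.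
Proof.
have := @indicator_diff_le _ (fun c => edge_lmgf_bound q1 q0 b (- l * c)) s t.
rewrite /= mulr1 mulrN1 opprK; apply.
  by rewrite mulr0 /edge_lmgf_bound oppr0 expR0 subrr !mulr0 add0r; case: b.
rewrite /edge_lmgf_bound opprK.
have q1_ge0 : 0 <= q1 by rewrite divr_ge0 // ltW.
have q0_ge0 : 0 <= q0 by rewrite divr_ge0 // ltW.
have := expR_add_expRN_ge2 l.
by case: b; nra.
Qed.

Lemma ER_cond_prob_deg_diff_le (A : {set {set 'I_n}}) (u v : 'I_n) (k l : R) :
  A \subset vpairs n -> 0 <= l ->
  ER_cond_prob p11 p10 p01 p00 A (fun B => (deg B u)%:R - (deg B v)%:R <= k)
  <= expR (l * k
      + ((deg A u)%:R * edge_lmgf_bound q1 q0 true (- l)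
         + (cdeg A u)%:R * edge_lmgf_bound q1 q0 false (- l))
      + ((deg A v)%:R * edge_lmgf_bound q1 q0 true l
         + (cdeg A v)%:R * edge_lmgf_bound q1 q0 false l)).
Proof.
move=> hA l_ge0; apply: le_trans (ER_cond_prob_deg_diff_le_prod A u v k l hA l_ge0) _.
rewrite -(sum_incident hA u (edge_lmgf_bound q1 q0 ^~ (- l))).
rewrite -(sum_incident hA v (edge_lmgf_bound q1 q0 ^~ l)) -addrA -big_split expRD.
rewrite ler_wpM2l ?expR_ge0 //= expR_sum; apply: ler_prod => e _.
rewrite divr_ge0 ?addr_ge0 ?mulr_ge0 ?expR_ge0 ?pab_ge0 //=.
by apply: le_trans (pab_mgf_le _ _) _; rewrite ler_expR edge_lmgf_bound_split.
Qed.

End ErdosRenyi.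

Theorem lemma4p2 (R : realType) (n : nat) (p11 p10 p01 p00 : R)
  (hp11 : 0 <= p11) (hp10 : 0 <= p10) (hp01 : 0 <= p01) (hp00 : 0 <= p00)
  (hsum : p11 + p10 + p01 + p00 = 1)
  (hp1 : 0 < p11 + p10) (hp0 : 0 < p01 + p00)
  (heps : p01 / (p01 + p00) + p10 / (p11 + p10) < 1)
  (A : {set {set 'I_n}}) (hA : A \subset vpairs n)
  (u v : 'I_n) (huv : (deg A v < deg A u)%N)
  (k eta : R) (heta : 0 < eta) :
  let eps := p01 / (p01 + p00) + p10 / (p11 + p10) in
  let phi := (deg A u)%:R * (p10 / (p11 + p10))
             + (cdeg A v)%:R * (p01 / (p01 + p00)) in
  (deg A u)%:R - (deg A v)%:R >=
    (1 - eps)^-1 * (k + 4 * Num.max eta (Num.sqrt (phi * eta))) ->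
  ER_cond_prob p11 p10 p01 p00 A
    (fun B => (deg B u)%:R - (deg B v)%:R <= k) <= expR (- eta).
Proof.
move=> eps phi margin.
set q1 := p10 / (p11 + p10); set q0 := p01 / (p01 + p00).
have q1_ge0 : 0 <= q1 by rewrite divr_ge0 // ltW.
have q0_ge0 : 0 <= q0 by rewrite divr_ge0 // ltW.
have phi_ge0 : 0 <= phi by rewrite addr_ge0 // mulr_ge0.
rewrite ler_pdivrMl ?subr_gt0 // -lerBrDl in margin.
have [l /andP[l_ge0 l_le] chernoff] := exists_chernoff_param phi_ge0 heta margin.
apply: le_trans (ER_cond_prob_deg_diff_le hp11 hp10 hp01 hp00 hp1 hp0 A u v k l hA l_ge0) _.
rewrite ler_expR /edge_lmgf_bound opprK -/q1 -/q0.
have deg_sum_eq : (deg A u)%:R + (cdeg A u)%:R = (deg A v)%:R + (cdeg A v)%:R :> R.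
  by rewrite -!natrD !deg_add_cdeg.
have deg_le : (deg A v)%:R <= (deg A u)%:R :> R by rewrite ler_nat ltnW.
have := chernoff_exponent_le l_ge0 l_le q1_ge0 q0_ge0 (ler0n _ _) deg_le (ler0n _ _) deg_sum_eq.
move: chernoff; rewrite /eps /phi -/q1 -/q0; lra.
Qed.
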